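(* Let $C\in\mathbb{R}^{n\times n}$ be symmetric, $\rho>0$, and let $(\tilde\sigma^k,\sigma^k,y^k)$ be generated by the ADMM-BM algorithm described in the context, with Assumption A holding. Then for all $k\ge1$ there exists an element $(g_{\tilde\sigma},g_\sigma)$ of the limiting subdifferential of $G_\rho$ at $(\tilde\sigma^{k+1},\sigma^{k+1})$ such that $$\left\|\begin{matrix}g_{\tilde\sigma}\\ g_\sigma\end{matrix}\right\|_F\le\Big(2\|C\|+\rho+\frac{\|C\|^2}{\rho}\Big)\left\|\begin{matrix}\tilde\sigma^{k+1}-\tilde\sigma^k\\ \sigma^{k+1}-\sigma^k\end{matrix}\right\|_F.$$
   Context: $\langle A,B\rangle=\mathrm{Tr}(A^\top B)$, $\|\cdot\|_F$ Frobenius norm (of the vertically stacked matrices), $\|C\|$ spectral norm. For $\sigma\in\mathbb{R}^{n\times r}$, $\sigma_i$ is its $i$-th row; $\mathcal{M}=\{\sigma:\|\sigma_i\|=1\ \forall i\}$; $\mathcal{I}_S$ the indicator function of $S$. $G_\rho(\tilde\sigma,\sigma)=\langle C,\tilde\sigma\tilde\sigma^\top\rangle+\frac\rho2\|\tilde\sigma-\sigma\|_F^2+\sum_i\mathcal{I}_{\{\|u\|=1\}}(\tilde\sigma_i)$. ADMM-BM with parameter $\rho$: choose $\tilde\sigma^0\in\mathcal{M}$, $\sigma^0=\tilde\sigma^0$, $y^0=C\tilde\sigma^0$. For $k=0,1,\dots$: $\gamma^k=\sigma^k-\frac1\rho(y^k+C\sigma^k)$ with rows $\gamma_i^k$; $\tilde\sigma^{k+1}_i=\gamma_i^k/\|\gamma_i^k\|$;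 $\sigma^{k+1}=\tilde\sigma^{k+1}+\frac1\rho(y^k-C\tilde\sigma^{k+1})$; $y^{k+1}=y^k+\rho(\tilde\sigma^{k+1}-\sigma^{k+1})$. Assumption A: $\gamma_i^k\neq0$ for all $i,k$. *)

From HB Require Import structures.
From mathcomp Require Import all_boot all_order all_algebra.
From mathcomp Require Import boolp classical_sets reals constructive_ereal.
Set Implicit Arguments. Unset Strict Implicit. Unset Printing Implicit Defensive.
Import Order.TTheory GRing.Theory Num.Theory.
Local Open Scope ring_scope.
Local Open Scope classical_set_scope.

Section ADMMBM.
Variable R : realType.

Definition frob_inner (n r : nat) (A B : 'M[R]_(n, r)) : R := \tr (A^T *m B).

Definition frob (n r : nat) (A : 'M[R]_(n, r)) : R := Num.sqrt (frob_inner A A).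

(* Frobenius norm of the vertically stacked pair (A over B) *)
Definition frob2 (n r : nat) (A B : 'M[R]_(n, r)) : R :=
  Num.sqrt (frob_inner A A + frob_inner B B).

Definition spec_norm (n : nat) (C : 'M[R]_n) : R :=
  sup [set frob (C *m v) | v in [set v : 'cV[R]_n | frob v <= 1]].

Definition row_norm (n r : nat) (A : 'M[R]_(n, r)) (i : 'I_n) : R := frob (row i A).

Definition in_M (n r : nat) (A : 'M[R]_(n, r)) : Prop := forall i, row_norm A i = 1.

(* G_rho(st, s) = <C, st st^T> + rho/2 ||st - s||_F^2 + sum_i I_{||u||=1}(st_i) *)
Definition G_rho (n r : nat) (C : 'M[R]_n) (rho : R)
    (st s : 'M[R]_(n, r)) : \bar R :=
  if asbool (in_M st) then
    (frob_inner C (st *m st^T) + rho / 2 * frob (st - s) ^+ 2)%:E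
  else +oo%E.

(* Frechet (regular) subdifferential of F : M x M -> \bar R at (x1,x2):
   F(x) finite and liminf_{y -> x, y <> x} (F y - F x - <g, y - x>)/||y - x|| >= 0,
   written out in epsilon-delta form. *)
Definition frechet_subdiff (n r : nat) (F : 'M[R]_(n, r) -> 'M[R]_(n, r) -> \bar R)
    (x1 x2 g1 g2 : 'M[R]_(n, r)) : Prop :=
  F x1 x2 \is a fin_num /\
  forall eps : R, 0 < eps -> exists delta : R, 0 < delta /\
    forall y1 y2 : 'M[R]_(n, r), frob2 (y1 - x1) (y2 - x2) < delta ->
      (F x1 x2 + (frob_inner g1 (y1 - x1) + frob_inner g2 (y2 - x2)
                  - eps * frob2 (y1 - x1) (y2 - x2))%:E <= F y1 y2)%E.

Definition seq_cvg (u : nat -> R) (l : R) : Prop :=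
  forall e : R, 0 < e -> exists N : nat, forall k : nat, (N <= k)%N -> `|u k - l| < e.

Definition limiting_subdiff (n r : nat) (F : 'M[R]_(n, r) -> 'M[R]_(n, r) -> \bar R)
    (x1 x2 g1 g2 : 'M[R]_(n, r)) : Prop :=
  F x1 x2 \is a fin_num /\
  exists (xs1 xs2 gs1 gs2 : nat -> 'M[R]_(n, r)),
    (forall k, frechet_subdiff F (xs1 k) (xs2 k) (gs1 k) (gs2 k)) /\
    seq_cvg (fun k => frob2 (xs1 k - x1) (xs2 k - x2)) 0 /\
    seq_cvg (fun k => fine (F (xs1 k) (xs2 k))) (fine (F x1 x2)) /\
    seq_cvg (fun k => frob2 (gs1 k - g1) (gs2 k - g2)) 0.

Definition normalize_rows (n r : nat) (g : 'M[R]_(n, r)) : 'M[R]_(n, r) :=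
  \matrix_(i, j) (g i j / row_norm g i).

Definition admm_gamma (n r : nat) (C : 'M[R]_n) (rho : R)
    (s y : 'M[R]_(n, r)) : 'M[R]_(n, r) :=
  s - rho^-1 *: (y + C *m s).

Definition is_admm_bm (n r : nat) (C : 'M[R]_n) (rho : R)
    (st s y : nat -> 'M[R]_(n, r)) : Prop :=
  [/\ in_M (st 0%N), s 0%N = st 0%N, y 0%N = C *m st 0%N &
   forall k : nat,
     [/\ st k.+1 = normalize_rows (admm_gamma C rho (s k) (y k)),
         s k.+1 = st k.+1 + rho^-1 *: (y k - C *m st k.+1) &
         y k.+1 = y k + rho *: (st k.+1 - s k.+1)]].

Definition assumption_A (n r : nat) (C : 'M[R]_n) (rho : R)
    (s y : nat -> 'M[R]_(n, r)) : Prop :=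
  forall (k : nat) (i : 'I_n), row i (admm_gamma C rho (s k) (y k)) != 0.

End ADMMBM.

(* Eliminating y^k from the s- and y-updates gives y^k = C st^k for every k, and
   the st-update says that st^(k+1) is the row-wise normalisation of gamma^k.
   Hence rho (gamma^k - st^(k+1)) has every row proportional to the corresponding
   row of st^(k+1); on the unit sphere <a_i, y_i - a_i> = -|y_i - a_i|^2 / 2, so
   such a matrix is a Frechet normal to M at st^(k+1) with a quadratic error term.
   Adding it to the gradient (2 C st + rho (st - s), -rho (st - s)) of the smooth
   part of G_rho gives a Frechet, hence limiting, subgradient.  Expressed through
   the increments dst = st^(k+1) - st^k and ds = s^(k+1) - s^k it reads
   (C dst + C ds + C^2 dst / rho - rho ds, - C dst), and the bound follows from
   the triangle inequality, ||C X||_F <= ||C|| ||X||_F and Cauchy-Schwarz in R^2. *)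

From HB Require Import structures.
From mathcomp Require Import all_boot all_order all_algebra.
From mathcomp Require Import boolp classical_sets reals constructive_ereal.
From mathcomp Require Import ring lra.
Set Implicit Arguments. Unset Strict Implicit. Unset Printing Implicit Defensive.
Import Order.TTheory GRing.Theory Num.Theory.
Local Open Scope ring_scope.

Section Frobenius.
Variable R : realType.

Lemma frob_innerE n r (A B : 'M[R]_(n, r)) :
  frob_inner A B = \sum_i \sum_j A i j * B i j.
Proof.
rewrite /frob_inner /mxtrace exchange_big /=; apply: eq_bigr => j _.
by rewrite !mxE; apply: eq_bigr => i _; rewrite mxE.
Qed.

Lemma frob_innerC n r (A B : 'M[R]_(n, r)) : frob_inner A B = frob_inner B A.
Proof. by rewrite /frob_inner -mxtrace_tr trmx_mul trmxK. Qed.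

Lemma frob_innerDr n r (A B D : 'M[R]_(n, r)) :
  frob_inner A (B + D) = frob_inner A B + frob_inner A D.
Proof. by rewrite /frob_inner mulmxDr mxtraceD. Qed.

Lemma frob_innerZr n r c (A B : 'M[R]_(n, r)) :
  frob_inner A (c *: B) = c * frob_inner A B.
Proof. by rewrite /frob_inner -scalemxAr mxtraceZ. Qed.

Lemma frob_innerNr n r (A B : 'M[R]_(n, r)) :
  frob_inner A (- B) = - frob_inner A B.
Proof. by rewrite -scaleN1r frob_innerZr mulN1r. Qed.

Lemma frob_innerDl n r (A B D : 'M[R]_(n, r)) :
  frob_inner (A + B) D = frob_inner A D + frob_inner B D.
Proof. by rewrite !(frob_innerC _ D) frob_innerDr. Qed.

Lemma frob_innerZl n r c (A B : 'M[R]_(n, r)) :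
  frob_inner (c *: A) B = c * frob_inner A B.
Proof. by rewrite !(frob_innerC _ B) frob_innerZr. Qed.

Lemma frob_innerNl n r (A B : 'M[R]_(n, r)) :
  frob_inner (- A) B = - frob_inner A B.
Proof. by rewrite !(frob_innerC _ B) frob_innerNr. Qed.

Lemma frob_inner_ge0 n r (A : 'M[R]_(n, r)) : 0 <= frob_inner A A.
Proof.
by rewrite frob_innerE sumr_ge0 // => i _; rewrite sumr_ge0 // => j _; rewrite -expr2 sqr_ge0.
Qed.

Lemma frob_inner_eq0 n r (A : 'M[R]_(n, r)) : frob_inner A A = 0 -> A = 0.
Proof.
have mul_self_ge0 (x : R) : 0 <= x * x by rewrite -expr2 sqr_ge0.
rewrite frob_innerE => /eqP; rewrite psumr_eq0 => [/allP A0|i _]; last first.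
  exact: sumr_ge0.
apply/matrixP => i j; rewrite mxE; move/(_ i (mem_index_enum _)): A0.
rewrite /= psumr_eq0 // => /allP/(_ j (mem_index_enum _)).
by rewrite mulf_eq0 orbb => /eqP.
Qed.

Lemma frob_ge0 n r (A : 'M[R]_(n, r)) : 0 <= frob A.
Proof. exact: sqrtr_ge0. Qed.

Lemma sqr_frob n r (A : 'M[R]_(n, r)) : frob A ^+ 2 = frob_inner A A.
Proof. by rewrite sqr_sqrtr // frob_inner_ge0. Qed.

Lemma frob_eq0 n r (A : 'M[R]_(n, r)) : (frob A == 0) = (A == 0).
Proof.
apply/eqP/eqP => [A0|->]; first by apply: frob_inner_eq0; rewrite -sqr_frob A0 expr0n.
by rewrite /frob frob_innerE big1 ?sqrtr0 // => i _; rewrite big1 // => j _; rewrite mxE mul0r.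
Qed.

Lemma frob0 n r : frob (0 : 'M[R]_(n, r)) = 0.
Proof. by apply/eqP; rewrite frob_eq0. Qed.

Lemma frobZ n r c (A : 'M[R]_(n, r)) : frob (c *: A) = `|c| * frob A.
Proof.
by rewrite /frob frob_innerZl frob_innerZr mulrA -expr2 sqrtrM ?sqr_ge0 // sqrtr_sqr.
Qed.

Lemma frobN n r (A : 'M[R]_(n, r)) : frob (- A) = frob A.
Proof. by rewrite -scaleN1r frobZ normrN1 mul1r. Qed.

Lemma frob_inner0l n r (B : 'M[R]_(n, r)) : frob_inner 0 B = 0.
Proof. by rewrite /frob_inner trmx0 mul0mx mxtrace0. Qed.

Lemma frob_inner0r n r (A : 'M[R]_(n, r)) : frob_inner A 0 = 0.
Proof. by rewrite frob_innerC frob_inner0l. Qed.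

Lemma frob_inner_le n r (A B : 'M[R]_(n, r)) : frob_inner A B <= frob A * frob B.
Proof.
have [->|A0] := eqVneq A 0; first by rewrite frob_inner0l frob0 mul0r.
have [->|B0] := eqVneq B 0; first by rewrite frob_inner0r frob0 mulr0.
have AB0 : 0 < frob A * frob B by rewrite mulr_gt0 // lt0r frob_ge0 frob_eq0 ?A0 ?B0.
have := frob_inner_ge0 (frob B *: A - frob A *: B).
rewrite !(frob_innerDl, frob_innerDr, frob_innerNl, frob_innerNr, frob_innerZl, frob_innerZr).
rewrite (frob_innerC B A) -!sqr_frob; nra.
Qed.

Lemma sqr_frobD n r (A B : 'M[R]_(n, r)) :
  frob (A + B) ^+ 2 = frob A ^+ 2 + 2 * frob_inner A B + frob B ^+ 2.
Proof.
by rewrite !sqr_frob frob_innerDl !frob_innerDr (frob_innerC B A); ring.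
Qed.

Lemma ler_frobD n r (A B : 'M[R]_(n, r)) : frob (A + B) <= frob A + frob B.
Proof.
rewrite -(ler_pXn2r (_ : 0 < 2)%N) ?nnegrE ?addr_ge0 ?frob_ge0 //.
by rewrite sqr_frobD sqrrD lerD2r lerD2l mulr_natl lerMn2r frob_inner_le.
Qed.

Lemma normr_entry_le_frob n r (A : 'M[R]_(n, r)) i j : `|A i j| <= frob A.
Proof.
rewrite -sqrtr_sqr ler_sqrt ?frob_inner_ge0 // frob_innerE (bigD1 i) //= (bigD1 j) //=.
rewrite -expr2 -addrA lerDl addr_ge0 ?sumr_ge0 // => [k _|k _]; last first.
  by rewrite sumr_ge0 // => l _; rewrite -expr2 sqr_ge0.
by rewrite -expr2 sqr_ge0.
Qed.

Lemma frob2E n r (A B : 'M[R]_(n, r)) :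
  frob2 A B = Num.sqrt (frob A ^+ 2 + frob B ^+ 2).
Proof. by rewrite !sqr_frob. Qed.

Lemma sqr_frob2 n r (A B : 'M[R]_(n, r)) :
  frob2 A B ^+ 2 = frob A ^+ 2 + frob B ^+ 2.
Proof. by rewrite frob2E sqr_sqrtr // addr_ge0 ?sqr_ge0. Qed.

End Frobenius.

Section SpectralNorm.
Variables (R : realType) (n : nat) (C : 'M[R]_n).

Lemma spec_norm_ubound :
  has_ubound [set frob (C *m v) | v in [set v : 'cV[R]_n | frob v <= 1]].
Proof.
exists (Num.sqrt (\sum_i (\sum_k `|C i k|) ^+ 2)) => _ [v /= v1 <-].
rewrite ler_sqrt ?sumr_ge0 // => [|i _]; last exact: sqr_ge0.
rewrite frob_innerE; apply: ler_sum => i _.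
rewrite big_ord1 -expr2 mxE -real_normK ?num_real // ler_pXn2r ?nnegrE ?sumr_ge0 //.
apply: le_trans (ler_norm_sum _ _ _) _; apply: ler_sum => k _.
by rewrite normrM ler_piMr // (le_trans (normr_entry_le_frob _ _ _)).
Qed.

Lemma spec_norm_ge0 : 0 <= spec_norm C.
Proof.
apply: (ub_le_sup spec_norm_ubound); exists 0; rewrite /= ?frob0 ?ler01 //.
by rewrite mulmx0 frob0.
Qed.

Lemma frob_mulmx_col_le (v : 'cV[R]_n) : frob (C *m v) <= spec_norm C * frob v.
Proof.
have [->|v0] := eqVneq v 0; first by rewrite mulmx0 !frob0 mulr0.
have v_gt0 : 0 < frob v by rewrite lt0r frob_eq0 v0 frob_ge0.
have unit_v : frob ((frob v)^-1 *: v) <= 1.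
  by rewrite frobZ ger0_norm ?invr_ge0 ?frob_ge0 // mulVf ?gt_eqF.
have : frob (C *m ((frob v)^-1 *: v)) <= spec_norm C.
  by apply: (ub_le_sup spec_norm_ubound); exists ((frob v)^-1 *: v).
by rewrite -scalemxAr frobZ ger0_norm ?invr_ge0 ?frob_ge0 // mulrC ler_pdivrMr.
Qed.

Lemma frob_inner_cols r (A B : 'M[R]_(n, r)) :
  frob_inner A B = \sum_j frob_inner (col j A) (col j B).
Proof.
rewrite frob_innerE exchange_big /=; apply: eq_bigr => j _; rewrite frob_innerE.
by apply: eq_bigr => i _; rewrite big_ord1 !mxE.
Qed.

Lemma frob_mulmx_le r (A : 'M[R]_(n, r)) : frob (C *m A) <= spec_norm C * frob A.
Proof.
rewrite -(ler_pXn2r (_ : 0 < 2)%N) ?nnegrE ?mulr_ge0 ?spec_norm_ge0 ?frob_ge0 //.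
rewrite exprMn !sqr_frob !frob_inner_cols mulr_sumr; apply: ler_sum => j _.
rewrite -!sqr_frob -exprMn !colE -mulmxA -colE.
rewrite ler_pXn2r ?nnegrE ?mulr_ge0 ?spec_norm_ge0 ?frob_ge0 //.
exact: frob_mulmx_col_le.
Qed.

Lemma frob_inner_mulmx_ge r (A : 'M[R]_(n, r)) :
  - (spec_norm C * frob A ^+ 2) <= frob_inner A (C *m A).
Proof.
rewrite lerNl -frob_innerNl (le_trans (frob_inner_le _ _)) // frobN mulrC expr2 mulrA.
by rewrite ler_wpM2r ?frob_ge0 // frob_mulmx_le.
Qed.

Hypothesis C_sym : C^T = C.

Lemma frob_inner_mulmxl r (A B : 'M[R]_(n, r)) :
  frob_inner (C *m A) B = frob_inner A (C *m B).
Proof. by rewrite /frob_inner trmx_mul C_sym mulmxA. Qed.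

Lemma frob_inner_quad r (A : 'M[R]_(n, r)) :
  frob_inner C (A *m A^T) = frob_inner A (C *m A).
Proof. by rewrite /frob_inner C_sym mulmxA mxtrace_mulC. Qed.

Lemma frob_inner_quadD r (A B : 'M[R]_(n, r)) :
  frob_inner (A + B) (C *m (A + B)) =
  frob_inner A (C *m A) + 2 * frob_inner B (C *m A) + frob_inner B (C *m B).
Proof.
rewrite mulmxDr frob_innerDl !frob_innerDr -(frob_inner_mulmxl A B) (frob_innerC _ B).
ring.
Qed.

End SpectralNorm.

Section UnitRows.
Variables (R : realType) (n r : nat).
Implicit Types (a g v y : 'M[R]_(n, r)).

Lemma sqr_row_norm g i : row_norm g i ^+ 2 = \sum_j g i j ^+ 2.
Proof.
by rewrite /row_norm sqr_frob frob_innerE big_ord1; apply: eq_bigr => j _; rewrite mxE.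
Qed.

Lemma normalize_rowsK g i j : row i g != 0 ->
  g i j = row_norm g i * normalize_rows g i j.
Proof. by rewrite -frob_eq0 => g0; rewrite mxE mulrC divfK. Qed.

Lemma normalize_rows_in_M g : (forall i, row i g != 0) -> in_M (normalize_rows g).
Proof.
move=> g0 i; rewrite -[row_norm _ i]ger0_norm ?frob_ge0 // -sqrtr_sqr sqr_row_norm.
under eq_bigr => j _ do rewrite mxE expr_div_n.
by rewrite -mulr_suml -sqr_row_norm mulfV ?sqrtr1 // expf_neq0 // frob_eq0.
Qed.

Lemma sum_unit_row_mul_sub a y i : in_M a -> in_M y ->
  \sum_j a i j * (y i j - a i j) = - (\sum_j (y i j - a i j) ^+ 2) / 2.
Proof.
move=> aM yM.
have : \sum_j ((y i j - a i j) ^+ 2 + 2 * (a i j * (y i j - a i j))) =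
       \sum_j y i j ^+ 2 - \sum_j a i j ^+ 2.
  by rewrite -sumrB; apply: eq_bigr => j _; ring.
rewrite big_split /= -mulr_sumr -!sqr_row_norm aM yM; lra.
Qed.

Lemma frob_inner_normal_le a y v (lam : 'I_n -> R) :
  in_M a -> in_M y -> (forall i j, v i j = lam i * a i j) ->
  frob_inner v (y - a) <= (\sum_i `|lam i|) / 2 * frob (y - a) ^+ 2.
Proof.
move=> aM yM va; rewrite sqr_frob !frob_innerE mulr_sumr; apply: ler_sum => i _.
have -> : \sum_j v i j * (y - a) i j = lam i * \sum_j a i j * (y i j - a i j).
  by rewrite mulr_sumr; apply: eq_bigr => j _; rewrite va !mxE mulrA.
have -> : \sum_j (y - a) i j * (y - a) i j = \sum_j (y i j - a i j) ^+ 2.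
  by apply: eq_bigr => j _; rewrite !mxE expr2.
rewrite sum_unit_row_mul_sub //; set D := \sum_j _.
have D0 : 0 <= D by rewrite sumr_ge0 // => j _; rewrite sqr_ge0.
have lam_le : - lam i <= \sum_k `|lam k|.
  rewrite (le_trans (ler_norm _)) // normrN (bigD1 i) //= lerDl sumr_ge0 //.
nra.
Qed.

End UnitRows.

Section Subdifferentials.
Variables (R : realType) (n r : nat) (F : 'M[R]_(n, r) -> 'M[R]_(n, r) -> \bar R).

Lemma frechet_subdiff_quadratic x1 x2 g1 g2 (L : R) :
  F x1 x2 \is a fin_num -> 0 <= L ->
  (forall y1 y2, (F x1 x2 + (frob_inner g1 (y1 - x1) + frob_inner g2 (y2 - x2)
                  - L * frob2 (y1 - x1) (y2 - x2) ^+ 2)%:E <= F y1 y2)%E) ->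
  frechet_subdiff F x1 x2 g1 g2.
Proof.
move=> Ffin L0 Fge; split => // eps eps0.
have L1 : 0 < L + 1 by rewrite ltr_wpDl.
exists (eps / (L + 1)); split => [|y1 y2]; first by rewrite divr_gt0.
set d := frob2 _ _ => dlt; apply: le_trans (Fge y1 y2); apply: leeD2l.
have d0 : 0 <= d := sqrtr_ge0 _.
rewrite lee_fin lerD2l lerN2 expr2 mulrA ler_wpM2r //.
rewrite ltr_pdivlMr // in dlt; rewrite -/d; nra.
Qed.

Lemma limiting_subdiff_frechet x1 x2 g1 g2 :
  frechet_subdiff F x1 x2 g1 g2 -> limiting_subdiff F x1 x2 g1 g2.
Proof.
move=> Fx; split; first by case: Fx.
have cvg_cst (u : R) : seq_cvg (fun=> u) u.
  by move=> e e0; exists 0%N => k _; rewrite subrr normr0.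
exists (fun=> x1), (fun=> x2), (fun=> g1), (fun=> g2).
rewrite /frob2 !subrr !frob_inner0l addr0 sqrtr0.
by do !split=> //; exact: cvg_cst.
Qed.

End Subdifferentials.

Lemma G_rho_frechet_subdiff (R : realType) (n r : nat) (C : 'M[R]_n) (rho : R)
    (a b v : 'M[R]_(n, r)) (lam : 'I_n -> R) :
  C^T = C -> 0 <= rho -> in_M a -> (forall i j, v i j = lam i * a i j) ->
  frechet_subdiff (G_rho C rho) a b
    (2 *: (C *m a) + rho *: (a - b) + v) (- (rho *: (a - b))).
Proof.
move=> C_sym rho0 aM va.
apply: (@frechet_subdiff_quadratic _ _ _ _ _ _ _ _ (spec_norm C + (\sum_i `|lam i|) / 2)).
- by rewrite /G_rho asboolT.
- by rewrite addr_ge0 ?spec_norm_ge0 ?divr_ge0 ?sumr_ge0.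
move=> y1 y2; rewrite /G_rho asboolT //; case: asboolP => [y1M|_]; last by rewrite leey.
rewrite -EFinD lee_fin !frob_inner_quad // sqr_frob2.
have normal_le := frob_inner_normal_le aM y1M va.
set d1 := y1 - a in normal_le *; set d2 := y2 - b.
have -> : y1 = a + d1 by rewrite addrC subrK.
have -> : a + d1 - y2 = (a - b) + (d1 - d2).
  by apply/matrixP => i j; rewrite /d2 !mxE; ring.
rewrite frob_inner_quadD // [frob (_ + (d1 - d2)) ^+ 2]sqr_frobD.
clearbody d1 d2; move: (a - b) => u.
have quad_ge := frob_inner_mulmx_ge C d1.
have dist_ge0 : 0 <= rho / 2 * frob (d1 - d2) ^+ 2 by rewrite mulr_ge0 ?divr_ge0 ?sqr_ge0.
have d2_ge0 : 0 <= (spec_norm C + (\sum_i `|lam i|) / 2) * frob d2 ^+ 2.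
  by rewrite mulr_ge0 ?sqr_ge0 ?addr_ge0 ?spec_norm_ge0 ?divr_ge0 ?sumr_ge0.
rewrite !(frob_innerDl, frob_innerDr, frob_innerNl, frob_innerNr, frob_innerZl, frob_innerZr).
rewrite (frob_innerC (C *m a) d1); lra.
Qed.

Lemma admm_scalar_bound (R : realType) (s rho x z f1 f2 : R) :
  0 <= s -> 0 < rho -> 0 <= x -> 0 <= z -> 0 <= f1 -> 0 <= f2 ->
  f1 <= (s + s ^+ 2 / rho) * x + (s + rho) * z -> f2 <= s * x ->
  Num.sqrt (f1 ^+ 2 + f2 ^+ 2) <=
    (2 * s + rho + s ^+ 2 / rho) * Num.sqrt (x ^+ 2 + z ^+ 2).
Proof.
set t := s ^+ 2 / rho => s0 rho0 x0 z0 f1_0 f2_0 f1_le f2_le.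
have t0 : 0 <= t by rewrite divr_ge0 ?sqr_ge0 ?ltW.
have st : s ^+ 2 = rho * t by rewrite /t mulrC divfK ?gt_eqF.
set K := 2 * s + rho + t.
have K0 : 0 <= K by rewrite /K; lra.
rewrite -(ger0_norm K0) -sqrtr_sqr -sqrtrM ?sqr_ge0 // ler_sqrt; last first.
  by rewrite mulr_ge0 ?addr_ge0 ?sqr_ge0.
set A := 2 * s + t; set B := s + rho.
have sum_le : f1 + f2 <= A * x + B * z by rewrite /A /B; lra.
have sqr_sum_le : (f1 + f2) ^+ 2 <= (A * x + B * z) ^+ 2.
  have f_ge0 := addr_ge0 f1_0 f2_0.
  by rewrite ler_pXn2r // nnegrE //; exact: le_trans f_ge0 sum_le.
have cauchy_schwarz : (A * x + B * z) ^+ 2 <= (A ^+ 2 + B ^+ 2) * (x ^+ 2 + z ^+ 2).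
  by have := sqr_ge0 (A * z - B * x); nra.
have coef_le : A ^+ 2 + B ^+ 2 <= K ^+ 2.
  by rewrite /A /B /K; nra.
have := ler_wpM2r (addr_ge0 (sqr_ge0 x) (sqr_ge0 z)) coef_le.
nra.
Qed.

Section ADMMSubgradient.
Variables (R : realType) (n r : nat) (C : 'M[R]_n) (rho : R).

Definition admm_subgrad_st (dst ds : 'M[R]_(n, r)) : 'M[R]_(n, r) :=
  C *m dst + C *m ds + rho^-1 *: (C *m (C *m dst)) - rho *: ds.

Definition admm_subgrad_s (dst : 'M[R]_(n, r)) : 'M[R]_(n, r) := - (C *m dst).

Lemma frob2_admm_subgrad_le (dst ds : 'M[R]_(n, r)) : 0 < rho ->
  frob2 (admm_subgrad_st dst ds) (admm_subgrad_s dst) <=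
    (2 * spec_norm C + rho + spec_norm C ^+ 2 / rho) * frob2 dst ds.
Proof.
move=> rho0; have C0 := spec_norm_ge0 C.
rewrite !frob2E; apply: admm_scalar_bound; rewrite ?frob_ge0 //; last first.
  by rewrite frobN frob_mulmx_le.
have CC_le : frob (C *m (C *m dst)) <= spec_norm C ^+ 2 * frob dst.
  by rewrite (le_trans (frob_mulmx_le _ _)) // expr2 -mulrA ler_wpM2l ?frob_mulmx_le.
rewrite /admm_subgrad_st.
have := ler_frobD (C *m dst + C *m ds + rho^-1 *: (C *m (C *m dst))) (- (rho *: ds)).
have := ler_frobD (C *m dst + C *m ds) (rho^-1 *: (C *m (C *m dst))).
have := ler_frobD (C *m dst) (C *m ds).
have := frob_mulmx_le C dst; have := frob_mulmx_le C ds.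
rewrite frobN !frobZ gtr0_norm ?invr_gt0 // gtr0_norm //.
have : rho^-1 * frob (C *m (C *m dst)) <= spec_norm C ^+ 2 / rho * frob dst.
  by rewrite [rho^-1 * _]mulrC mulrAC ler_pM2r ?invr_gt0.
lra.
Qed.
End ADMMSubgradient.

Section ADMMBMIterates.
Variables (R : realType) (n r : nat) (C : 'M[R]_n) (rho : R).
Variables (st s y : nat -> 'M[R]_(n, r)).
Hypotheses (C_sym : C^T = C) (rho_gt0 : 0 < rho).
Hypotheses (admm : is_admm_bm C rho st s y) (gamma_rows_neq0 : assumption_A C rho s y).

Let rho_neq0 : rho != 0. Proof. by rewrite gt_eqF. Qed.

Lemma admm_bm_dual k : y k = C *m st k.
Proof.
case: admm => _ _ y0 step; case: k => [//|k]; have [_ -> ->] := step k.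
by apply/matrixP => i j; rewrite !mxE; field.
Qed.

Lemma admm_bm_primal k :
  s k.+1 = st k.+1 + rho^-1 *: (C *m st k - C *m st k.+1).
Proof. by case: admm => _ _ _ /(_ k) [_ -> _]; rewrite admm_bm_dual. Qed.

Lemma admm_bm_limiting_subdiff k :
  limiting_subdiff (G_rho C rho) (st k.+1) (s k.+1)
    (admm_subgrad_st C rho (st k.+1 - st k) (s k.+1 - s k))
    (admm_subgrad_s C (st k.+1 - st k)).
Proof.
have [_ _ _ /(_ k) [st_next _ _]] := admm.
set gam := admm_gamma C rho (s k) (y k) in st_next.
have gam_neq0 : forall i, row i gam != 0 := gamma_rows_neq0 k.
have g_stE : admm_subgrad_st C rho (st k.+1 - st k) (s k.+1 - s k) =
    2 *: (C *m st k.+1) + rho *: (st k.+1 - s k.+1) + rho *: (gam - st k.+1).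
  rewrite /admm_subgrad_st /gam /admm_gamma admm_bm_dual !admm_bm_primal.
  rewrite !(mulmxBr, mulmxDr, =^~ scalemxAr).
  by apply/matrixP => i j; rewrite !mxE; field.
have g_sE : admm_subgrad_s C (st k.+1 - st k) = - (rho *: (st k.+1 - s k.+1)).
  rewrite /admm_subgrad_s admm_bm_primal mulmxBr.
  by apply/matrixP => i j; rewrite !mxE; field.
rewrite g_stE g_sE; clearbody gam; apply/limiting_subdiff_frechet.
apply: (@G_rho_frechet_subdiff _ _ _ _ _ _ _ _ (fun i => rho * (row_norm gam i - 1))) => //.
- exact: ltW.
- by rewrite st_next; apply: normalize_rows_in_M.
move=> i j; rewrite !mxE (normalize_rowsK j (gam_neq0 i)) st_next; ring.
Qed.

End ADMMBMIterates.

Theorem lemma7 (R : realType) (n r : nat) (C : 'M[R]_n) (rho : R)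
    (st s y : nat -> 'M[R]_(n, r)) :
  C^T = C -> 0 < rho ->
  is_admm_bm C rho st s y ->
  assumption_A C rho s y ->
  forall k : nat, (1 <= k)%N ->
  exists g1 g2 : 'M[R]_(n, r),
    limiting_subdiff (G_rho C rho) (st k.+1) (s k.+1) g1 g2 /\
    frob2 g1 g2 <=
      (2 * spec_norm C + rho + spec_norm C ^+ 2 / rho)
      * frob2 (st k.+1 - st k) (s k.+1 - s k).
Proof.
(* y^k = C st^k already holds at k = 0. *)
move=> C_sym rho_gt0 admm gamma_rows_neq0 k _.
exists (admm_subgrad_st C rho (st k.+1 - st k) (s k.+1 - s k)),
  (admm_subgrad_s C (st k.+1 - st k)); split.
  exact: admm_bm_limiting_subdiff C_sym rho_gt0 admm gamma_rows_neq0 k.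
exact: frob2_admm_subgrad_le.
Qed.
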